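(* Let $\mathcal{G}$ be a simple temporal clique on $n$ vertices and let $\mathcal{T}^-=(V,E^-_T)$ be obtained by the forward construction (for any choice of the arbitrary choices). Then the number of emitters is at most $n/2$.
   Context: A simple temporal clique is a pair $\mathcal{G}=(G,\lambda)$ where $G=(V,E)$ is the complete graph on a finite set $V$ of $n$ vertices and $\lambda:E\to\mathbb{N}$ assigns to each edge a single integer label such that any two distinct edges sharing an endpoint have different labels; the label of an arc $(x,y)$ is $\lambda(\{x,y\})$. For a vertex $v$, $e^-(v)$ is the edge incident to $v$ with smallest label. Forward construction: let $E^-$ be the set of arcs $(u,v)$ with $\{u,v\}=e^-(v)$, except that if $e^-(u)=e^-(v)=\{u,v\}$ only one of the two arcs $(u,v),(v,u)$ is included (arbitrarily). Initialize $E^-_T:=E^-$. For every vertex $v$ of out-degree at least $2$ in $(V,E^-)$, let $(v,u_1),\dots,(v,u_\ell)$ be its out-arcs in $E^-$, where $(v,u_\ell)$ has the largest label; for each $i<\ell$, if $u_i$ has out-degree $0$ in $(V,E^-)$, replace $(v,u_i)$ by $(u_i,v)$ in $E^-_T$, and otherwise remove $(v,u_i)$ from $E^-_T$. Set $\mathcal{T}^-=(V,E^-_T)$. An emitter is a vertex of out-degree $0$ in $\mathcal{T}^-$. *)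

From mathcomp Require Import all_boot.
Set Implicit Arguments. Unset Strict Implicit. Unset Printing Implicit Defensive.

(* A simple temporal clique on the finite vertex set V: every pair {x,y} with
   x <> y is an edge, lam x y is its label (lam x x is irrelevant). *)
Definition simple_temporal_clique (V : finType) (lam : V -> V -> nat) : Prop :=
  (forall x y : V, lam x y = lam y x) /\
  (forall x y z : V, x != y -> x != z -> y != z -> lam x y <> lam x z).

Definition emin (V : finType) (lam : V -> V -> nat) (v u : V) : bool :=
  (u != v) && [forall w : V, (w != v) ==> (lam v u <= lam v w)].

(* Em is a valid choice of E^- : arcs (u,v) with {u,v} = e^-(v); for a mutual
   pair (e^-(u) = e^-(v) = {u,v}) exactly one of the two arcs is chosen. *)
Definition Eminus_spec (V : finType) (lam : V -> V -> nat) (Em : rel V) : Prop :=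
  (forall u v : V, Em u v -> emin lam v u) /\
  (forall u v : V, emin lam v u -> ~~ emin lam u v -> Em u v) /\
  (forall u v : V, emin lam v u -> emin lam u v -> (Em u v (+) Em v u)).

Definition outdeg (V : finType) (E : rel V) (x : V) : nat := #|[set y | E x y]|.

Definition last_arc (V : finType) (lam : V -> V -> nat) (Em : rel V) (v u : V) : bool :=
  Em v u && [forall w : V, Em v w ==> (lam v w <= lam v u)].

Definition ET (V : finType) (lam : V -> V -> nat) (Em : rel V) : rel V :=
  fun x y =>
    (Em x y && ((outdeg Em x < 2) || last_arc lam Em x y))
    || [&& Em y x, 2 <= outdeg Em y, ~~ last_arc lam Em y x & outdeg Em x == 0].

Definition emitter (V : finType) (lam : V -> V -> nat) (Em : rel V) (x : V) : bool :=
  outdeg (ET lam Em) x == 0.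

(* Call an arc (y, x) of E^- kept if it survives the construction unchanged, i.e. if y has
   out-degree at most 1 in E^- or (y, x) is its largest-label out-arc.  Labels at y are
   distinct, so y has at most one kept out-arc.  An emitter x has no out-arc in E^-
   (otherwise one of them would survive), so the arc into x along e^-(x) belongs to E^-
   and must be kept, since otherwise it would be reversed into an out-arc of x.  Mapping
   each emitter to the tail of this arc is therefore injective, and it lands on
   non-emitters, which gives at least as many non-emitters as emitters. *)

From mathcomp Require Import all_boot.
Set Implicit Arguments. Unset Strict Implicit.

Lemma double_card_le_of_functional_parent (T : finType) (R : rel T) (S : {set T}) :
  (forall y x1 x2, R y x1 -> R y x2 -> x1 = x2) ->
  (forall x, x \in S -> exists2 y, R y x & y \notin S) ->
  2 * #|S| <= #|T|.
Proof.
move=> R_fun S_parent.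
pose parent x := odflt x [pick y | R y x & y \notin S].
have parentP x : x \in S -> R (parent x) x && (parent x \notin S).
  move=> /S_parent[y Ryx yS]; rewrite /parent; case: pickP => [z //|/(_ y)].
  by rewrite Ryx yS.
have parent_inj : {in S &, injective parent}.
  move=> x1 x2 /parentP/andP[R1 _] /parentP/andP[R2 _] eq12.
  by rewrite eq12 in R1; exact: R_fun R1 R2.
have disjS : [disjoint S & parent @: S].
  rewrite -setI_eq0; apply/eqP/setP => z; rewrite !inE.
  apply/negP => /andP[Sz /imsetP[x Sx def_z]].
  by move: (parentP x Sx); rewrite -def_z Sz andbF.
have [_ /eqP cardU] := leq_card_setU S (parent @: S); rewrite disjS in cardU.
by rewrite mul2n -addnn -{2}(card_in_imset parent_inj) -cardU max_card.
Qed.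

Lemma outdeg_eq0P (V : finType) (E : rel V) x :
  reflect (forall y, ~~ E x y) (outdeg E x == 0).
Proof.
rewrite /outdeg cards_eq0; apply: (iffP eqP) => [E0 y | noE].
  by apply/negP => Exy; have := in_set0 y; rewrite -E0 inE Exy.
by apply/setP => y; rewrite !inE (negbTE (noE y)).
Qed.

Lemma exists_emin (V : finType) (lam : V -> V -> nat) v :
  2 <= #|V| -> exists u, emin lam v u.
Proof.
move=> /card_gt1P[x [y [_ _ xy]]].
have [w wv] : exists w, w != v.
  by case: (eqVneq x v) => [def_x|]; [exists y; rewrite -def_x eq_sym | exists x].
have [u uv u_min] := arg_minnP (lam v) (wv : (fun w => w != v) w).
exists u; rewrite /emin uv; apply/forallP => w'; apply/implyP; exact: u_min.
Qed.

Section ForwardConstruction.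
Variables (V : finType) (lam : V -> V -> nat) (Em : rel V).
Hypothesis Em_spec : Eminus_spec lam Em.

Definition kept_arc y x := Em y x && ((outdeg Em y < 2) || last_arc lam Em y x).

Lemma kept_arc_ET y x : kept_arc y x -> ET lam Em y x.
Proof. by rewrite /kept_arc /ET => ->. Qed.

Lemma kept_arc_not_emitter y x : kept_arc y x -> ~~ emitter lam Em y.
Proof. by move=> /kept_arc_ET yx; apply/outdeg_eq0P => /(_ x); rewrite yx. Qed.

Lemma Em_irrefl y x : Em y x -> y != x.
Proof. by case: Em_spec => Em_emin _ /Em_emin/andP[]; rewrite eq_sym. Qed.

Lemma exists_last_arc v z : Em v z -> exists u, last_arc lam Em v u.
Proof.
move=> vz; have [u vu u_max] := arg_maxnP (lam v) vz.
exists u; rewrite /last_arc vu; apply/forallP => w; apply/implyP; exact: u_max.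
Qed.

Lemma emitter_Em_out0 x : emitter lam Em x -> forall z, ~~ Em x z.
Proof.
move=> /outdeg_eq0P noET z; apply/negP => xz.
have [small | big] := ltnP (outdeg Em x) 2.
  by have := noET z; rewrite /ET xz small.
have [u /[dup] xu /andP[Exu _]] := exists_last_arc xz.
by have := noET u; rewrite /ET Exu xu orbT.
Qed.

Lemma emin_arc_into_sink x u :
  (forall z, ~~ Em x z) -> emin lam x u -> Em u x.
Proof.
case: Em_spec => _ [Em_single Em_mutual] noEm xu.
have [ux | not_ux] := boolP (emin lam u x); last exact: Em_single.
by have := Em_mutual _ _ xu ux; rewrite (negbTE (noEm u)) addbF.
Qed.

Lemma emitter_kept_in_arc x :
  2 <= #|V| -> emitter lam Em x -> exists y, kept_arc y x.
Proof.
move=> V2 x_em; have noEm := emitter_Em_out0 x_em.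
have x_sink : outdeg Em x == 0 by apply/outdeg_eq0P.
have [u xu] := exists_emin lam x V2; have ux := emin_arc_into_sink noEm xu.
exists u; rewrite /kept_arc ux; apply/negPn/negP; rewrite negb_or -leqNgt.
move=> /andP[big not_last]; move/outdeg_eq0P: x_em => /(_ u); apply/negP.
by rewrite /ET ux big not_last x_sink orbT.
Qed.

Hypothesis lam_clique : simple_temporal_clique lam.

Lemma kept_arc_functional y x1 x2 : kept_arc y x1 -> kept_arc y x2 -> x1 = x2.
Proof.
move=> /andP[yx1 keep1] /andP[yx2 keep2]; apply/eqP/negPn/negP => x12.
have [small | big] := ltnP (outdeg Em y) 2.
  suff : 2 <= outdeg Em y by rewrite leqNgt small.
  rewrite /outdeg (cardsD1 x1) inE yx1 ltnS card_gt0.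
  by apply/set0Pn; exists x2; rewrite !inE eq_sym x12 yx2.
move: keep1 keep2; rewrite ltnNge big => /andP[_ /forallP max1] /andP[_ /forallP max2].
case: lam_clique => _ /(_ y x1 x2 (Em_irrefl yx1) (Em_irrefl yx2) x12); apply.
by apply/eqP; rewrite eqn_leq (implyP (max1 x2) yx2) (implyP (max2 x1) yx1).
Qed.

End ForwardConstruction.

Theorem lemma3 (V : finType) (lam : V -> V -> nat) (Em : rel V) :
  2 <= #|V| ->
  simple_temporal_clique lam ->
  Eminus_spec lam Em ->
  2 * #|[set x | emitter lam Em x]| <= #|V|.
Proof.
move=> V2 lam_clique Em_spec.
apply: (double_card_le_of_functional_parent (kept_arc_functional Em_spec lam_clique)).
move=> x; rewrite inE => /(emitter_kept_in_arc Em_spec V2)[y yx].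
by exists y; rewrite // inE; exact: kept_arc_not_emitter yx.
Qed.
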